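(* There exist a binary matrix $A$ and two binary column vectors $x,y$ such that $R_{binary}(A|x)=R_{binary}(A|y)=R_{binary}(A)$, but $R_{binary}(A|x,y)>R_{binary}(A)$.
   Context: For a binary $n\times m$ matrix $A$, $R_{binary}(A)$ is the least $k$ such that $A=UV$ with $U\in\{0,1\}^{n\times k}$, $V\in\{0,1\}^{k\times m}$, ordinary arithmetic. $(A|x_1,\dots,x_t)$ denotes $A$ with columns $x_1,\dots,x_t$ appended on the right. *)

From mathcomp Require Import all_boot all_order all_algebra.
Set Implicit Arguments. Unset Strict Implicit. Unset Printing Implicit Defensive.
Import GRing.Theory.
Local Open Scope ring_scope.

(* Binary matrices are integer matrices with all entries in {0,1};
   products use ordinary integer arithmetic. *)
Definition binary_mx (n m : nat) (A : 'M[int]_(n, m)) : Prop :=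
  forall i j, A i j = 0 \/ A i j = 1.

Definition binary_factorizable (n m : nat) (A : 'M[int]_(n, m)) (k : nat) : Prop :=
  exists (U : 'M[int]_(n, k)) (V : 'M[int]_(k, m)),
    binary_mx U /\ binary_mx V /\ A = U *m V.

Definition is_binary_rank (n m : nat) (A : 'M[int]_(n, m)) (r : nat) : Prop :=
  binary_factorizable A r /\ (forall k, binary_factorizable A k -> (r <= k)%N).

From mathcomp Require Import all_boot all_order all_algebra.
Set Implicit Arguments. Unset Strict Implicit. Unset Printing Implicit Defensive.
Import GRing.Theory Num.Theory.
Local Open Scope ring_scope.

(* A binary factorization A = U V writes A as a sum of k all-ones rectangles
   (the l-th one is supported on rows {i | U i l = 1} x columns {j | V l j = 1}),
   and no rectangle can cover two cells of a fooling set. For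
       A = 1 1 1    x = 0    y = 0
           1 0 1        1        0
           0 1 1        0        1
           0 0 1        1        1
   the three rectangles of A can be chosen so that either x or y (but not both)
   is one of their columns, so R(A|x) = R(A|y) = R(A) = 3, whereas A|x|y has
   a fooling set of size 4. *)

Definition fooling_set (R : zmodType) n m (M : 'M[R]_(n, m))
    (ps : seq ('I_n * 'I_m)) : bool :=
  [&& uniq ps, all (fun p => M p.1 p.2 != 0) ps &
      all (fun p => all (fun q =>
        [|| p == q, M p.1 q.2 == 0 | M q.1 p.2 == 0]) ps) ps].

Section NonnegativeProduct.

Variables (R : numDomainType) (n k m : nat).
Variables (U : 'M[R]_(n, k)) (V : 'M[R]_(k, m)).
Hypotheses (U_ge0 : forall i l, 0 <= U i l) (V_ge0 : forall l j, 0 <= V l j).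

Lemma mulmx_ge0_eq0 i j :
  ((U *m V) i j == 0) = [forall l, U i l * V l j == 0].
Proof.
rewrite mxE psumr_eq0 => [|l _]; last exact: mulr_ge0.
by apply/allP/forallP => [H l | H l _]; [exact: H (mem_index_enum l) | exact: H].
Qed.

Lemma fooling_set_mulmx_size_le ps : fooling_set (U *m V) ps -> (size ps <= k)%N.
Proof.
move=> /and3P[ps_uniq /allP ps_nz /allP ps_fool].
pose wit p := [pick l | U p.1 l * V l p.2 != 0].
have witP p : p \in ps -> exists2 l, wit p = Some l & U p.1 l * V l p.2 != 0.
  move/ps_nz; rewrite mulmx_ge0_eq0 => /forallPn[l nz_l].
  by rewrite /wit; case: pickP => [l' ?|/(_ l)]; [exists l' | rewrite nz_l].
have wit_inj : {in ps &, injective wit}.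
  move=> p q p_ps q_ps; have [l -> nz_p] := witP p p_ps.
  have [l' -> nz_q [eq_ll']] := witP q q_ps; rewrite -{}eq_ll' {l'} in nz_q.
  move: nz_p nz_q; rewrite !mulf_eq0 !negb_or => /andP[Up Vp] /andP[Uq Vq].
  have /allP/(_ q q_ps)/or3P[/eqP //||] := ps_fool p p_ps;
    rewrite mulmx_ge0_eq0 => /forallP/(_ l); rewrite mulf_eq0.
  - by rewrite (negbTE Up) (negbTE Vq).
  - by rewrite (negbTE Uq) (negbTE Vp).
have <- : size (map Some (enum 'I_k)) = k by rewrite size_map size_enum_ord.
rewrite -(size_map wit) uniq_leq_size ?map_inj_in_uniq //.
by move=> _ /mapP[p /witP[l -> _] ->]; rewrite map_f ?mem_enum.
Qed.

End NonnegativeProduct.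

Lemma binary_mx_ge0 n m (A : 'M[int]_(n, m)) i j : binary_mx A -> 0 <= A i j.
Proof. by move/(_ i j) => [|] ->. Qed.

Lemma binary_mx1 n : binary_mx (1%:M : 'M[int]_n).
Proof. by move=> i j; rewrite mxE; case: (i == j); [right | left]. Qed.

Lemma binary_mx_row_mx n m1 m2 (A : 'M[int]_(n, m1)) (B : 'M[int]_(n, m2)) :
  binary_mx A -> binary_mx B -> binary_mx (row_mx A B).
Proof. by move=> binA binB i j; rewrite mxE; case: splitP. Qed.

Lemma binary_factorizable_nrows n m (A : 'M[int]_(n, m)) :
  binary_mx A -> binary_factorizable A n.
Proof. by move=> binA; exists 1%:M, A; rewrite mul1mx; do !split=> //; apply: binary_mx1. Qed.

Lemma binary_factorizable_ncols n m (A : 'M[int]_(n, m)) :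
  binary_mx A -> binary_factorizable A m.
Proof. by move=> binA; exists A, 1%:M; rewrite mulmx1; do !split=> //; apply: binary_mx1. Qed.

Lemma binary_factorizable_row_mxl n m1 m2 (A : 'M[int]_(n, m1))
    (B : 'M[int]_(n, m2)) k :
  binary_factorizable (row_mx A B) k -> binary_factorizable A k.
Proof.
move=> [U [V [binU [binV AB_UV]]]]; exists U, (lsubmx V).
split=> //; split; first by move=> i j; rewrite mxE.
by move: AB_UV; rewrite -[V]hsubmxK mul_mx_row row_mxKl => /eq_row_mx[].
Qed.

Lemma fooling_set_size_le n m (M : 'M[int]_(n, m)) ps k :
  binary_factorizable M k -> fooling_set M ps -> (size ps <= k)%N.
Proof.
move=> [U [V [binU [binV ->]]]].
by apply: fooling_set_mulmx_size_le => i j; apply: binary_mx_ge0.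
Qed.

Lemma is_binary_rank_fooling_set n m (M : 'M[int]_(n, m)) ps :
  fooling_set M ps -> binary_factorizable M (size ps) ->
  is_binary_rank M (size ps).
Proof. by move=> foolM facM; split=> // k /fooling_set_size_le; apply. Qed.

Lemma is_binary_rank_row_mx n m1 m2 (A : 'M[int]_(n, m1))
    (B : 'M[int]_(n, m2)) r :
  is_binary_rank A r -> binary_factorizable (row_mx A B) r ->
  is_binary_rank (row_mx A B) r.
Proof. by move=> [_ minA] facAB; split=> // k /binary_factorizable_row_mxl/minA. Qed.

Definition mx_of_rows n m (rs : seq (seq nat)) : 'M[int]_(n, m) :=
  \matrix_(i, j) (nth 0 (nth [::] rs i) j)%:Z.

Lemma binary_mx_of_rows n m rs :
  all (all (fun a => a <= 1)%N) rs -> binary_mx (mx_of_rows n m rs).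
Proof.
move=> /allP rs01 i j; rewrite mxE.
suff: (nth 0 (nth [::] rs i) j <= 1)%N by case: (nth _ _ _) => [|[|]]; auto.
have [i_rs|] := ltnP i (size rs); last by move/(nth_default [::])->; rewrite nth_nil.
have [j_r|] := ltnP j (size (nth [::] rs i)); last by move/(nth_default 0%N)->.
exact: allP (rs01 _ (mem_nth [::] i_rs)) _ (mem_nth 0%N j_r).
Qed.

Ltac mx_entrywise :=
  apply/matrixP; case=> [[|[|[|[|?]]]] ?] //; case=> [[|[|[|[|?]]]] ?] //;
  rewrite !mxE !big_ord_recr big_ord0 /= !mxE.

Definition Aex := mx_of_rows 4 3
  [:: [:: 1; 1; 1]; [:: 1; 0; 1]; [:: 0; 1; 1]; [:: 0; 0; 1]]%N.
Definition xex := mx_of_rows 4 1 [:: [:: 0]; [:: 1]; [:: 0]; [:: 1]]%N.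
Definition yex := mx_of_rows 4 1 [:: [:: 0]; [:: 0]; [:: 1]; [:: 1]]%N.

Definition Ux := mx_of_rows 4 3
  [:: [:: 1; 1; 0]; [:: 1; 0; 1]; [:: 0; 1; 0]; [:: 0; 0; 1]]%N.
Definition Vx := mx_of_rows 3 3 [:: [:: 1; 0; 0]; [:: 0; 1; 1]; [:: 0; 0; 1]]%N.
Definition Uy := mx_of_rows 4 3
  [:: [:: 1; 1; 0]; [:: 1; 0; 0]; [:: 0; 1; 1]; [:: 0; 0; 1]]%N.
Definition Vy := mx_of_rows 3 3 [:: [:: 1; 0; 1]; [:: 0; 1; 0]; [:: 0; 0; 1]]%N.
Definition e3 := mx_of_rows 3 1 [:: [:: 0]; [:: 0]; [:: 1]]%N.

Lemma Aex_factor_x : Aex = Ux *m Vx. Proof. by mx_entrywise. Qed.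
Lemma xex_factor : xex = Ux *m e3. Proof. by mx_entrywise. Qed.
Lemma Aex_factor_y : Aex = Uy *m Vy. Proof. by mx_entrywise. Qed.
Lemma yex_factor : yex = Uy *m e3. Proof. by mx_entrywise. Qed.

Lemma binary_factorizable_Aex_x : binary_factorizable (row_mx Aex xex) 3.
Proof.
exists Ux, (row_mx Vx e3); rewrite mul_mx_row -Aex_factor_x -xex_factor.
by do !split; do ?apply: binary_mx_row_mx; apply: binary_mx_of_rows.
Qed.

Lemma binary_factorizable_Aex_y : binary_factorizable (row_mx Aex yex) 3.
Proof.
exists Uy, (row_mx Vy e3); rewrite mul_mx_row -Aex_factor_y -yex_factor.
by do !split; do ?apply: binary_mx_row_mx; apply: binary_mx_of_rows.
Qed.

Local Notation "''r' i" := (@Ordinal 4 i isT) (at level 0, i at level 0).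
Local Notation "''c' j" := (@Ordinal 3 j isT) (at level 0, j at level 0).

Lemma fooling_set_Aex : fooling_set Aex [:: ('r 0, 'c 0); ('r 2, 'c 1); ('r 3, 'c 2)].
Proof. by rewrite /fooling_set /= !mxE. Qed.

Lemma fooling_set_Aex_xy : fooling_set (row_mx (row_mx Aex xex) yex)
  [:: ('r 0, lshift 1 (lshift 1 'c 0)); ('r 1, lshift 1 (rshift 3 ord0));
      ('r 2, lshift 1 (lshift 1 'c 1)); ('r 3, rshift 4 ord0)].
Proof. by rewrite /fooling_set /= ?(row_mxEl, row_mxEr) !mxE. Qed.

Theorem mainTheorem7 :
  exists (n m : nat) (A : 'M[int]_(n, m)) (x y : 'cV[int]_n) (r r' : nat),
    binary_mx A /\ binary_mx x /\ binary_mx y /\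
    is_binary_rank A r /\
    is_binary_rank (row_mx A x) r /\
    is_binary_rank (row_mx A y) r /\
    is_binary_rank (row_mx (row_mx A x) y) r' /\
    (r < r')%N.
Proof.
have binA : binary_mx Aex by apply: binary_mx_of_rows.
have binx : binary_mx xex by apply: binary_mx_of_rows.
have biny : binary_mx yex by apply: binary_mx_of_rows.
have rkA : is_binary_rank Aex 3.
  exact: is_binary_rank_fooling_set fooling_set_Aex
           (binary_factorizable_ncols binA).
have rkAxy : is_binary_rank (row_mx (row_mx Aex xex) yex) 4.
  have binAxy : binary_mx (row_mx (row_mx Aex xex) yex).
    by apply: binary_mx_row_mx => //; apply: binary_mx_row_mx.
  exact: is_binary_rank_fooling_set fooling_set_Aex_xy
           (binary_factorizable_nrows binAxy).
exists 4%N, 3%N, Aex, xex, yex, 3%N, 4%N.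
do 4!split=> //.
split; first exact: is_binary_rank_row_mx rkA binary_factorizable_Aex_x.
split; first exact: is_binary_rank_row_mx rkA binary_factorizable_Aex_y.
by split.
Qed.
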